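(* Let $B$ be a Banach space, $C\subset B$ a convex set, $f:B\to\mathbb{R}\cup\{+\infty\}$ a function, and $k$ a symmetric bilinear map, with pairing written $\langle\pi,k(\gamma)\rangle$, which is negative (not necessarily definite) on $\Delta C=\mathrm{Span}\{\pi-\gamma:\pi,\gamma\in C\}$, i.e. $\langle z,k(z)\rangle\leq0$ for all $z\in\Delta C$. Define $\mathcal{L}:C\to\mathbb{R}\cup\{+\infty\}$ by $\mathcal{L}(\pi)=\frac12\langle\pi,k(\pi)\rangle+2f(\pi)$ and $\mathcal{F}(\pi,\gamma)=\frac12\langle\pi,k(\gamma)\rangle+f(\pi)+f(\gamma)$ for $\pi,\gamma\in C$. Assume there exists $\pi_0\in C$ with $\mathcal{L}(\pi_0)<+\infty$. Then for every $(\pi_*,\gamma_* )\in\arg\min_{C\times C}\mathcal{F}$, one has $\mathcal{F}(\pi_*,\pi_* )=\mathcal{F}(\gamma_*,\gamma_* )=\mathcal{F}(\pi_*,\gamma_* )$. Moreover, if either $k$ is definite on $\Delta C$ (i.e. $\langle z,k(z)\rangle=0$, $z\in\Delta C$ implies $z=0$) or $f$ is strictly convex, then $\pi_*=\gamma_*$. *)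

From HB Require Import structures.
From mathcomp Require Import all_boot all_order all_algebra.
From mathcomp Require Import all_classical all_reals all_analysis.
Set Implicit Arguments. Unset Strict Implicit. Unset Printing Implicit Defensive.
Import Order.TTheory GRing.Theory Num.Theory.
Import numFieldNormedType.Exports.
Local Open Scope classical_set_scope.
Local Open Scope ring_scope.

Section Defs.
Variables (R : realType) (B : normedModType R).

Definition convex_subset (C : set B) : Prop :=
  forall x y (t : R), C x -> C y -> 0 <= t -> t <= 1 ->
    C (t *: x + (1 - t) *: y).

(* K : B -> B -> R is a symmetric bilinear map; K x y stands for <x, k(y)> *)
Definition symmetric_bilinear (K : B -> B -> R) : Prop :=
  (forall x y, K x y = K y x) /\
  (forall (a : R) x y z, K (a *: x + y) z = a * K x z + K y z).

Definition DeltaC (C : set B) : set B :=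
  [set z | exists (n : nat) (a : 'I_n -> R) (p g : 'I_n -> B),
      (forall i, C (p i) /\ C (g i)) /\
      z = \sum_(i < n) a i *: (p i - g i)].

Definition negative_on (K : B -> B -> R) (D : set B) : Prop :=
  forall z, D z -> K z z <= 0.

Definition definite_on (K : B -> B -> R) (D : set B) : Prop :=
  forall z, D z -> K z z = 0 -> z = 0.

Definition strictly_convex (f : B -> \bar R) : Prop :=
  forall x y (t : R), f x \is a fin_num -> f y \is a fin_num -> x != y ->
    0 < t -> t < 1 ->
    (f (t *: x + (1 - t) *: y)%R < t%:E * f x + (1 - t)%:E * f y)%E.

Definition L_obj (K : B -> B -> R) (f : B -> \bar R) (p : B) : \bar R :=
  ((2^-1 * K p p)%:E + 2%:E * f p)%E.

Definition F_obj (K : B -> B -> R) (f : B -> \bar R) (p g : B) : \bar R :=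
  ((2^-1 * K p g)%:E + f p + f g)%E.

Definition is_argmin2 (C : set B) (F : B -> B -> \bar R) (p g : B) : Prop :=
  C p /\ C g /\ (forall p' g', C p' -> C g' -> (F p g <= F p' g')%E).

End Defs.

(** Write [F] for [F_obj K f] and [z = ps - gs] for a minimiser [(ps, gs)].
    Minimality gives [F ps gs <= F ps ps] and [F ps gs <= F gs gs], while
    bilinearity gives the identity
      [F ps ps + F gs gs - 2 F ps gs = <z, k(z)> / 2 <= 0].
    Hence all three values coincide and [<z, k(z)> = 0], which settles the
    definite case.  If [f] is strictly convex, the midpoint [m] of [ps] and
    [gs] satisfies [<m, k(m)> = <ps, k(gs)> + <z, k(z)> / 4 = <ps, k(gs)>] and
    [2 f(m) < f(ps) + f(gs)], so [F m m < F ps gs] unless [ps = gs]. *)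

From HB Require Import structures.
From mathcomp Require Import all_boot all_order all_algebra.
From mathcomp Require Import all_classical all_reals all_analysis.
From mathcomp Require Import lra.
Set Implicit Arguments. Unset Strict Implicit. Unset Printing Implicit Defensive.
Import Order.TTheory GRing.Theory Num.Theory.
Import numFieldNormedType.Exports.
Local Open Scope classical_set_scope.
Local Open Scope ring_scope.

Local Notation midpoint x y := (2^-1 *: x + (1 - 2^-1) *: y).

Section SymmetricBilinear.
Variables (R : realType) (B : normedModType R) (K : B -> B -> R).
Hypothesis symK : symmetric_bilinear K.

Lemma symbilC x y : K x y = K y x.
Proof. by case: symK. Qed.

Lemma symbilDl x y z : K (x + y) z = K x z + K y z.
Proof. by case: symK => _ /(_ 1 x y z); rewrite scale1r mul1r. Qed.

Lemma symbil0l z : K 0 z = 0.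
Proof. by apply: (addIr (K 0 z)); rewrite -symbilDl !addr0 add0r. Qed.

Lemma symbilZl a x z : K (a *: x) z = a * K x z.
Proof. by case: symK => _ /(_ a x 0 z); rewrite !addr0 symbil0l addr0. Qed.

Lemma symbilNl x z : K (- x) z = - K x z.
Proof. by rewrite -scaleN1r symbilZl mulN1r. Qed.

Lemma symbil_sqrD x y : K (x + y) (x + y) = K x x + K y y + 2 * K x y.
Proof. by rewrite !symbilDl ![K _ (x + y)]symbilC !symbilDl (symbilC y x); lra. Qed.

Lemma symbil_sqrB x y : K (x - y) (x - y) = K x x + K y y - 2 * K x y.
Proof.
rewrite symbil_sqrD symbilNl [K y _]symbilC symbilNl opprK.
by rewrite [K x (- y)]symbilC symbilNl (symbilC y x) mulrN.
Qed.

Lemma symbil_sqr_midpoint x y :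
  K (midpoint x y) (midpoint x y) = K x y + 4^-1 * K (x - y) (x - y).
Proof.
have -> : midpoint x y = 2^-1 *: (x + y).
  by rewrite scalerDr; congr (_ + _); congr (_ *: _); lra.
rewrite symbilZl symbilC symbilZl symbil_sqrD symbil_sqrB; lra.
Qed.

End SymmetricBilinear.

Lemma DeltaC_sub (R : realType) (B : normedModType R) (C : set B) x y :
  C x -> C y -> DeltaC C (x - y).
Proof.
move=> Cx Cy; exists 1%N, (fun=> 1), (fun=> x), (fun=> y).
by rewrite big_ord1 scale1r.
Qed.

Section Objective.
Variables (R : realType) (B : normedModType R) (K : B -> B -> R) (f : B -> \bar R).

Lemma F_objE p g a b :
  f p = a%:E -> f g = b%:E -> F_obj K f p g = (2^-1 * K p g + a + b)%:E.
Proof. by rewrite /F_obj => -> ->; rewrite -!EFinD. Qed.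

Lemma F_obj_diag p : F_obj K f p p = L_obj K f p.
Proof.
rewrite /F_obj /L_obj -addeA; congr (_ + _)%E.
case: (f p) => [r| |] /=.
- by rewrite -EFinM mulr_natl mulr2n.
- by rewrite mulry gtr0_sg // mul1e.
- by rewrite mulrNy gtr0_sg // mul1e.
Qed.

Hypothesis fNoo : forall x, f x != -oo%E.

Lemma F_obj_lt_pinfty_fin p g :
  (F_obj K f p g < +oo)%E -> f p \is a fin_num /\ f g \is a fin_num.
Proof.
rewrite /F_obj; move: (fNoo p) (fNoo g).
by case: (f p) => [r| |]; case: (f g) => [s| |].
Qed.

Lemma strictly_convex_midpoint x y a b :
  strictly_convex f -> f x = a%:E -> f y = b%:E -> x != y ->
  exists2 c, f (midpoint x y) = c%:E & c + c < a + b.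
Proof.
move=> convf fx fy xy.
have := convf x y 2^-1; rewrite fx fy => /(_ isT isT xy).
have half_gt0 : 0 < 2^-1 :> R by lra.
have half_lt1 : 2^-1 < 1 :> R by lra.
move=> /(_ half_gt0 half_lt1); rewrite -!EFinM -EFinD.
case: (f (midpoint x y)) (fNoo (midpoint x y)) => [c| |] // _.
by rewrite lte_fin => ltc; exists c => //; lra.
Qed.

End Objective.

Section Argmin.
Variables (R : realType) (B : normedModType R) (C : set B).
Variables (K : B -> B -> R) (f : B -> \bar R) (ps gs : B).
Hypothesis minF : is_argmin2 C (F_obj K f) ps gs.

Lemma argmin_fin_num :
  (forall x, f x != -oo%E) -> (exists p0, C p0 /\ (L_obj K f p0 < +oo)%E) ->
  f ps \is a fin_num /\ f gs \is a fin_num.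
Proof.
move=> fNoo [p0 [Cp0 Lp0]]; apply: F_obj_lt_pinfty_fin fNoo _ _ _.
have [_ [_ minPG]] := minF.
by apply: le_lt_trans (minPG p0 p0 Cp0 Cp0) _; rewrite F_obj_diag.
Qed.

Variables a b : R.
Hypotheses (fps : f ps = a%:E) (fgs : f gs = b%:E).
Hypotheses (symK : symmetric_bilinear K) (negK : negative_on K (DeltaC C)).

Lemma argmin_balanced :
  [/\ F_obj K f ps ps = F_obj K f ps gs, F_obj K f gs gs = F_obj K f ps gs
    & K (ps - gs) (ps - gs) = 0].
Proof.
have [Cps [Cgs minPG]] := minF.
have := minPG ps ps Cps Cps; have := minPG gs gs Cgs Cgs.
rewrite (F_objE K fps fgs) (F_objE K fps fps) (F_objE K fgs fgs) !lee_fin.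
move=> le_gg le_pp; have := negK (DeltaC_sub Cps Cgs).
rewrite (symbil_sqrB symK) => neg.
by split; [congr EFin; lra | congr EFin; lra | lra].
Qed.

Lemma argmin_eq_definite : definite_on K (DeltaC C) -> ps = gs.
Proof.
have [Cps [Cgs _]] := minF; have [_ _ Kz0] := argmin_balanced.
by move=> defK; apply/subr0_eq/defK; first exact: DeltaC_sub.
Qed.

Lemma argmin_eq_strictly_convex :
  (forall x, f x != -oo%E) -> convex_subset C -> strictly_convex f -> ps = gs.
Proof.
move=> fNoo convC convf; have [Cps [Cgs minPG]] := minF.
case: (eqVneq ps gs) => // neq_pg; exfalso.
have [c fm ltc] := strictly_convex_midpoint fNoo convf fps fgs neq_pg.
have Cm : C (midpoint ps gs) by apply: convC => //; lra.
have := minPG _ _ Cm Cm; rewrite (F_objE K fm fm) (F_objE K fps fgs) lee_fin.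
have [_ _ Kz0] := argmin_balanced.
by rewrite (symbil_sqr_midpoint symK) Kz0 mulr0 addr0; lra.
Qed.

End Argmin.

Theorem theorem3 (R : realType) (B : completeNormedModType R)
  (C : set B) (f : B -> \bar R) (K : B -> B -> R) :
  convex_subset C ->
  (forall x, f x != -oo%E) ->
  symmetric_bilinear K ->
  negative_on K (DeltaC C) ->
  (exists p0, C p0 /\ (L_obj K f p0 < +oo)%E) ->
  forall ps gs, is_argmin2 C (F_obj K f) ps gs ->
    (F_obj K f ps ps = F_obj K f gs gs /\ F_obj K f gs gs = F_obj K f ps gs) /\
    ((definite_on K (DeltaC C) \/ strictly_convex f) -> ps = gs).
Proof.
move=> convC fNoo symK negK finL ps gs minF.
have [/fineK/esym fps /fineK/esym fgs] := argmin_fin_num minF fNoo finL.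
have [Fpp Fgg _] := argmin_balanced minF fps fgs symK negK.
split; first by rewrite Fpp Fgg.
case=> [defK | convf].
- exact: (argmin_eq_definite minF fps fgs symK negK defK).
- exact: (argmin_eq_strictly_convex minF fps fgs symK negK fNoo convC convf).
Qed.
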